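(* Let $k$ be a field and $L$ a Lie $k$-algebra. Every $k$-involution $*$ on $L$ extends to a $k$-involution of the division ring $\mathfrak{D}(L)$ that restricts, on $U(L)\subseteq \mathfrak{D}(L)$, to the unique $k$-involution of $U(L)$ extending $*$. In particular, the principal involution $x\mapsto -x$ of $L$ extends to a $k$-involution of $\mathfrak{D}(L)$.
   Context: A $k$-involution of an associative $k$-algebra $R$ is a $k$-linear map $*:R\to R$ with $(xy)^*=y^*x^*$ and $x^{**}=x$. A $k$-involution of a Lie $k$-algebra $L$ is a $k$-linear map $*:L\to L$ with $[x,y]^*=[y^*,x^*]$ and $x^{**}=x$; the principal involution is $x\mapsto -x$. Any $k$-involution of $L$ extends uniquely to a $k$-involution of the universal enveloping algebra $U(L)$. Lichtman's division ring $\mathfrak{D}(L)$: let $F_i=0$ for $i>0$, $F_0=k$, and for $n>0$ let $F_{-n}$ be the subspace of $U(L)$ spanned by products of at most $n$ elements of $L$; put $\vartheta(f)=\sup\{i: f\in F_i\}$. Extend $\vartheta$ to the Laurent polynomial ring $U(L)[t,t^{-1}]$ ($t$ central) by $\vartheta(\sum_i t^if_i)=\min_i\{\vartheta(f_i)+i\}$. Let $T=\{h: \vartheta(h)\ge 0\}$, $\mathcal U=T\setminus tT$, $T_n=T/t^nT$, $\mathcal U_n$ the image of $\mathcal U$ in $T_n$ (a regular Ore set), $S_n=\mathcal U_n^{-1}T_n$, $S=\varprojlim S_n$, and $D=\mathcal C^{-1}S$ with $\mathcal C=\{1,t,t^2,\dots\}$. Then $D$ is a division ring containing $U(L)[t,t^{-1}]$,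 and $\mathfrak{D}(L)$ is the division subring of $D$ generated by $U(L)$. If $U(L)$ is an Ore domain, $\mathfrak{D}(L)$ is its Ore division ring of fractions. *)

From HB Require Import structures.
From mathcomp Require Import all_boot all_order all_algebra.
Set Implicit Arguments. Unset Strict Implicit. Unset Printing Implicit Defensive.
Import GRing.Theory.
Local Open Scope ring_scope.

Definition is_lie_bracket (k : fieldType) (L : lmodType k) (br : L -> L -> L) : Prop :=
  [/\ (forall (a : k) (x y z : L), br (a *: x + y) z = a *: br x z + br y z),
      (forall (a : k) (x y z : L), br z (a *: x + y) = a *: br z x + br z y),
      (forall x : L, br x x = 0) &
      (forall x y z : L, br x (br y z) + br y (br z x) + br z (br x y) = 0)].

Definition klinear (k : fieldType) (V W : lmodType k) (f : V -> W) : Prop :=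
  forall (a : k) (x y : V), f (a *: x + y) = a *: f x + f y.

Definition lie_involution (k : fieldType) (L : lmodType k) (br : L -> L -> L)
    (s : L -> L) : Prop :=
  [/\ klinear s,
      (forall x y, s (br x y) = br (s y) (s x)) &
      (forall x, s (s x) = x)].

Definition alg_involution (k : fieldType) (A : algType k) (s : A -> A) : Prop :=
  [/\ klinear s,
      (forall x y, s (x * y) = s y * s x) &
      (forall x, s (s x) = x)].

Definition lie_map (k : fieldType) (L : lmodType k) (br : L -> L -> L)
    (A : algType k) (f : L -> A) : Prop :=
  klinear f /\ forall x y, f (br x y) = f x * f y - f y * f x.

Definition alg_hom (k : fieldType) (A B : algType k) (g : A -> B) : Prop :=
  [/\ klinear g, (forall x y, g (x * y) = g x * g y) & g 1 = 1].

Definition is_UEA (k : fieldType) (L : lmodType k) (br : L -> L -> L)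
    (U : algType k) (iota : L -> U) : Prop :=
  lie_map br iota /\
  forall (A : algType k) (f : L -> A), lie_map br f ->
    (exists g : U -> A, alg_hom g /\ forall x, g (iota x) = f x) /\
    (forall g1 g2 : U -> A, alg_hom g1 -> alg_hom g2 ->
       (forall x, g1 (iota x) = f x) -> (forall x, g2 (iota x) = f x) ->
       forall u, g1 u = g2 u).

(* filt iota n u  <->  u lies in F_{-n}: the k-span of the products of at most
   n elements of iota(L) (the empty product being 1, so F_0 = k). *)
Definition filt (k : fieldType) (L : lmodType k) (U : algType k) (iota : L -> U)
    (n : nat) (u : U) : Prop :=
  exists r : seq (k * seq L),
    all (fun p => (size p.2 <= n)%N) r /\
    u = \sum_(p <- r) p.1 *: \prod_(x <- p.2) iota x.

(* T = { h in U[t,t^-1] : vartheta(h) >= 0 }.  Such h has no negative powers of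
   t, so T is represented inside U[t] = {poly U} (t = 'X, central):
   sum_i t^i f_i lies in T iff f_i in F_{-i} for all i. *)
Definition inT (k : fieldType) (L : lmodType k) (U : algType k) (iota : L -> U)
    (p : {poly U}) : Prop :=
  forall i : nat, filt iota i p`_i.

Definition in_tnT (k : fieldType) (L : lmodType k) (U : algType k) (iota : L -> U)
    (n : nat) (p : {poly U}) : Prop :=
  exists q, inT iota q /\ p = 'X ^+ n * q.

Definition in_calU (k : fieldType) (L : lmodType k) (U : algType k) (iota : L -> U)
    (p : {poly U}) : Prop :=
  inT iota p /\ ~ in_tnT iota 1 p.

Definition is_inv (R : pzRingType) (x : R) : Prop :=
  exists y : R, y * x = 1 /\ x * y = 1.

(* phi : T -> Sn is (the composite T -> T_n -> S_n of the projection with) the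
   left Ore localization S_n = calU_n^{-1} T_n: a ring homomorphism on T whose
   kernel is t^n T, inverting calU, and every element of Sn is u^{-1} r. *)
Definition is_Ore_loc_Tn (k : fieldType) (L : lmodType k) (U : algType k)
    (iota : L -> U) (n : nat) (Sn : pzRingType) (phi : {poly U} -> Sn) : Prop :=
  (forall p q, inT iota p -> inT iota q -> phi (p + q) = phi p + phi q) /\
  (forall p q, inT iota p -> inT iota q -> phi (p * q) = phi p * phi q) /\
  phi 1 = 1 /\
  (forall p, inT iota p -> (phi p = 0 <-> in_tnT iota n p)) /\
  (forall u, in_calU iota u -> is_inv (phi u)) /\
  (forall x : Sn, exists u r, [/\ in_calU iota u, inT iota r & phi u * x = phi r]).

Definition ring_hom (R S : pzRingType) (f : R -> S) : Prop :=
  [/\ (forall x y, f (x + y) = f x + f y), (forall x y, f (x * y) = f x * f y) & f 1 = 1].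

(* All data of the construction of D and D(L), characterised by their defining
   (universal) properties:
   - phi n : T -> S_n  the Ore localizations S_n = calU_n^{-1} T_n,
   - rho n : S_{n+1} -> S_n  the induced transition maps,
   - (S, pi) = inverse limit of the S_n, theta : T -> S the induced map,
   - j : S -> D the localization D = C^{-1} S at C = {1, t, t^2, ...},
   - eps : U(L) -> D the resulting embedding (u = t^{-n} (t^n u)). *)
Definition lichtman_data (k : fieldType) (L : lmodType k) (U : algType k)
    (iota : L -> U) (Sn : nat -> pzRingType) (phi : forall n, {poly U} -> Sn n)
    (rho : forall n, Sn n.+1 -> Sn n) (S : pzRingType) (pi : forall n, S -> Sn n)
    (theta : {poly U} -> S) (D : unitRingType) (j : S -> D) (eps : U -> D) : Prop :=
  (forall n, is_Ore_loc_Tn iota n (phi n)) /\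
      (forall n, ring_hom (rho n) /\
                 forall p, inT iota p -> rho n (phi n.+1 p) = phi n p) /\
      (forall n, ring_hom (pi n) /\ forall s, rho n (pi n.+1 s) = pi n s) /\
      (forall x : forall n, Sn n, (forall n, rho n (x n.+1) = x n) ->
         exists s, (forall n, pi n s = x n) /\
                   forall s', (forall n, pi n s' = x n) -> s' = s) /\
      (forall n p, inT iota p -> pi n (theta p) = phi n p) /\
      (ring_hom j /\ injective j /\ (j (theta 'X)) \is a GRing.unit /\
         forall d : D, exists m s, (j (theta 'X)) ^+ m * d = j s) /\
      (forall (u : U) (n : nat), filt iota n u ->
         eps u * (j (theta 'X)) ^+ n = j (theta ('X ^+ n * polyC u))).

Definition gen_divring (D : unitRingType) (X : D -> Prop) (d : D) : Prop :=
  forall P : D -> Prop,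
    (forall x, X x -> P x) -> P 1 ->
    (forall x y, P x -> P y -> P (x - y)) ->
    (forall x y, P x -> P y -> P (x * y)) ->
    (forall x, P x -> P x^-1) -> P d.

(* sigma : D -> D restricts to a k-involution of the subring DL of D, where the
   k-structure of D comes from k -> U(L) -> D via eps. *)
Definition divring_involution (k : fieldType) (U : algType k) (D : unitRingType)
    (eps : U -> D) (DL : D -> Prop) (sigma : D -> D) : Prop :=
  [/\ (forall x, DL x -> DL (sigma x)),
      (forall x y, DL x -> DL y -> sigma (x + y) = sigma x + sigma y),
      (forall (a : k) x, DL x -> sigma (eps (a%:A) * x) = eps (a%:A) * sigma x),
      (forall x y, DL x -> DL y -> sigma (x * y) = sigma y * sigma x) &
      (forall x, DL x -> sigma (sigma x) = x)].

From HB Require Import structures.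
From mathcomp Require Import all_boot all_order all_algebra.
From mathcomp Require Import boolp.
Import GRing.Theory.
Local Open Scope ring_scope.
Set Implicit Arguments. Unset Strict Implicit. Unset Printing Implicit Defensive.

(* An involution * of L extends, by the universal property of
   U(L), to an involution tau of U(L); tau preserves the filtration F, so its
   coefficientwise extension to U(L)[t] (fixing t) is an anti-automorphism of T
   that preserves t^n T and the Ore set calU.  It therefore induces
   anti-involutions u^-1 r |-> tau(r) tau(u)^-1 of the Ore localizations S_n,
   compatible with the transition maps, hence an anti-involution of the inverse
   limit S fixing the central element t, and finally one of D = C^-1 S.  On
   U(L) it is eps o tau, so it preserves the division subring D(L) generated
   by eps(U(L)).  The principal involution x |-> -x is a Lie involution by
   antisymmetry of the bracket. *)

Section Filtration.
Variables (k : fieldType) (L : lmodType k) (U : algType k) (iota : L -> U).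

Lemma filt0 n : filt iota n 0.
Proof. by exists [::]; rewrite big_nil. Qed.

Lemma filtD n u v : filt iota n u -> filt iota n v -> filt iota n (u + v).
Proof.
move=> [r [Hr ->]] [r' [Hr' ->]]; exists (r ++ r').
by rewrite all_cat Hr Hr' big_cat.
Qed.

Lemma filtZ n a u : filt iota n u -> filt iota n (a *: u).
Proof.
move=> [r [Hr ->]]; exists [seq (a * p.1, p.2) | p <- r]; split.
  by rewrite all_map; apply: sub_all Hr => p.
by rewrite big_map scaler_sumr; apply: eq_bigr => p _; rewrite scalerA.
Qed.

Lemma filtN n u : filt iota n u -> filt iota n (- u).
Proof. by rewrite -scaleN1r; apply: filtZ. Qed.

Lemma filt_sum n (I : Type) (r : seq I) (P : pred I) (F : I -> U) :
  (forall i, P i -> filt iota n (F i)) -> filt iota n (\sum_(i <- r | P i) F i).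
Proof. by move=> HF; apply: (big_ind (filt iota n)) => //; [exact: filt0 | exact: filtD]. Qed.

Lemma filt_le n m u : (n <= m)%N -> filt iota n u -> filt iota m u.
Proof.
move=> le_nm [r [Hr ->]]; exists r; split=> //.
by apply: sub_all Hr => p /= /leq_trans; apply.
Qed.

Lemma filt_monomial n c (s : seq L) : (size s <= n)%N ->
  filt iota n (c *: \prod_(x <- s) iota x).
Proof. by move=> Hs; exists [:: (c, s)]; rewrite /= Hs big_seq1. Qed.

Lemma filt_alg a : filt iota 0 a%:A.
Proof. by exists [:: (a, [::])]; rewrite /= big_seq1 big_nil. Qed.

Lemma filt1 n : filt iota n 1.
Proof. by apply: (@filt_le 0) => //; rewrite -[1]scale1r; apply: filt_alg. Qed.

Lemma filtM n m u v : filt iota n u -> filt iota m v -> filt iota (n + m) (u * v).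
Proof.
move=> [r [Hr ->]] [r' [Hr' ->]]; rewrite big_distrl /= big_seq.
apply: filt_sum => p pr; rewrite big_distrr /= big_seq; apply: filt_sum => q qr.
rewrite -scalerAl -scalerAr scalerA -big_cat /=; apply: filt_monomial.
by rewrite size_cat leq_add //; [move/allP: Hr; apply | move/allP: Hr'; apply].
Qed.

End Filtration.

Section PolynomialsT.
Variables (k : fieldType) (L : lmodType k) (U : algType k) (iota : L -> U).
Local Notation inT := (inT iota).

Lemma inTD p q : inT p -> inT q -> inT (p + q).
Proof. by move=> Hp Hq i; rewrite coefD; apply: filtD. Qed.

Lemma inTN p : inT p -> inT (- p).
Proof. by move=> Hp i; rewrite coefN; apply: filtN. Qed.

Lemma inTB p q : inT p -> inT q -> inT (p - q).
Proof. by move=> Hp Hq; apply/inTD/inTN. Qed.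

Lemma inTM p q : inT p -> inT q -> inT (p * q).
Proof.
move=> Hp Hq i; rewrite coefM; apply: filt_sum => j _.
by have := filtM (Hp j) (Hq (i - j)%N); rewrite subnKC // -ltnS.
Qed.

Lemma inT_XnC n c : filt iota n c -> inT ('X^n * c%:P).
Proof.
move=> Hc i; rewrite coefXnM; case: ltnP => [_|le_ni]; first exact: filt0.
rewrite coefC; case: eqP => [E|_]; last exact: filt0.
by apply: filt_le Hc; rewrite -(subnK le_ni) E.
Qed.

Lemma inT1 : inT 1.
Proof. by have := inT_XnC (filt1 iota 0); rewrite expr0 mul1r. Qed.

Lemma inTXn n : inT 'X^n.
Proof. by have := inT_XnC (filt1 iota n); rewrite mulr1. Qed.

Lemma inTX : inT 'X.
Proof. by have := inTXn 1; rewrite expr1. Qed.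

Lemma calU1 : in_calU iota 1.
Proof.
split; first exact: inT1.
move=> [q [_ /(congr1 (fun p : {poly U} => p`_0))]].
by rewrite coef1 expr1 coefXM /= => /eqP; rewrite oner_eq0.
Qed.

End PolynomialsT.

Section AntiInvolution.
Variables (k : fieldType) (U : algType k) (tau : U -> U).
Hypothesis tauI : alg_involution tau.

Lemma tau0 : tau 0 = 0.
Proof.
case: tauI => lin _ _; have := lin 1 0 0; rewrite !scale1r addr0.
by move/(canLR (addrK (tau 0))); rewrite subrr.
Qed.

Lemma tauD x y : tau (x + y) = tau x + tau y.
Proof. by case: tauI => lin _ _; have := lin 1 x y; rewrite !scale1r. Qed.

Lemma tauZ a x : tau (a *: x) = a *: tau x.
Proof. by case: tauI => lin _ _; have := lin a x 0; rewrite !addr0 tau0 addr0. Qed.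

Lemma tauM x y : tau (x * y) = tau y * tau x.
Proof. by case: tauI. Qed.

Lemma tauK : involutive tau.
Proof. by case: tauI. Qed.

Lemma tau1 : tau 1 = 1.
Proof. by have := tauM (tau 1) 1; rewrite mulr1 !tauK mulr1. Qed.

Lemma tauN x : tau (- x) = - tau x.
Proof. by rewrite -scaleN1r tauZ scaleN1r. Qed.

Lemma tau_alg a : tau a%:A = a%:A.
Proof. by rewrite tauZ tau1. Qed.

Lemma tau_sum (I : Type) (r : seq I) (P : pred I) (F : I -> U) :
  tau (\sum_(i <- r | P i) F i) = \sum_(i <- r | P i) tau (F i).
Proof. exact: (big_morph tau tauD tau0). Qed.

Definition tau_poly (p : {poly U}) : {poly U} := map_poly tau p.
Local Notation tp := tau_poly.

Lemma coef_tau_poly p i : (tp p)`_i = tau p`_i.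
Proof. by rewrite coef_map_id0 // tau0. Qed.

Lemma tau_polyD p q : tp (p + q) = tp p + tp q.
Proof. by apply/polyP => i; rewrite coefD !coef_tau_poly coefD tauD. Qed.

Lemma tau_polyB p q : tp (p - q) = tp p - tp q.
Proof. by apply/polyP => i; rewrite coefB !coef_tau_poly coefB tauD tauN. Qed.

Lemma tau_polyM p q : tp (p * q) = tp q * tp p.
Proof.
apply/polyP => i; rewrite coef_tau_poly coefMr coefM tau_sum.
by apply: eq_bigr => j _; rewrite tauM !coef_tau_poly.
Qed.

Lemma tau_polyK : involutive tp.
Proof. by move=> p; apply/polyP => i; rewrite !coef_tau_poly tauK. Qed.

Lemma tau_polyXn n : tp 'X^n = 'X^n.
Proof.
by apply/polyP => i; rewrite coef_tau_poly !coefXn; case: eqP; rewrite ?tau1 ?tau0.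
Qed.

Lemma tau_poly1 : tp 1 = 1.
Proof. by have := tau_polyXn 0; rewrite expr0. Qed.

Lemma tau_poly_XnC n c : tp ('X^n * c%:P) = 'X^n * (tau c)%:P.
Proof.
have tpC : tp c%:P = (tau c)%:P.
  by apply/polyP => i; rewrite coef_tau_poly !coefC; case: eqP; rewrite ?tau0.
by rewrite tau_polyM tpC tau_polyXn; apply: commr_polyXn.
Qed.

Variables (L : lmodType k) (iota : L -> U) (star : L -> L).
Hypothesis tau_iota : forall x, tau (iota x) = iota (star x).

Lemma tau_prod_iota (s : seq L) :
  tau (\prod_(x <- s) iota x) = \prod_(x <- rev (map star s)) iota x.
Proof.
elim: s => [|a s IH]; first by rewrite !big_nil tau1.
by rewrite big_cons tauM IH /= rev_cons -cats1 big_cat big_seq1 tau_iota.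
Qed.

Lemma tau_filt n u : filt iota n u -> filt iota n (tau u).
Proof.
move=> [r [Hr ->]]; rewrite tau_sum big_seq; apply: filt_sum => p pr.
rewrite tauZ tau_prod_iota; apply: filt_monomial; rewrite size_rev size_map.
by move/allP: Hr; apply.
Qed.

Lemma tau_poly_inT p : inT iota p -> inT iota (tp p).
Proof. by move=> Hp i; rewrite coef_tau_poly; apply: tau_filt. Qed.

Lemma tau_poly_tnT n p : in_tnT iota n p -> in_tnT iota n (tp p).
Proof.
move=> [q [Hq ->]]; exists (tp q); split; first exact: tau_poly_inT.
by rewrite tau_polyM tau_polyXn; apply: commr_polyXn.
Qed.

Lemma tau_poly_calU p : in_calU iota p -> in_calU iota (tp p).
Proof.
move=> [Hp Hn]; split; first exact: tau_poly_inT.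
by move/tau_poly_tnT; rewrite tau_polyK.
Qed.

End AntiInvolution.

Section GenericInverse.
Variable R : pzRingType.
Implicit Types x y c : R.

(* The rings S_n are not unit rings: ginv is the two-sided inverse when it
   exists, and 0 otherwise. *)
Definition ginv x : R :=
  match pselect (is_inv x) with left H => projT1 (cid H) | right _ => 0 end.

Lemma ginvl x : is_inv x -> ginv x * x = 1.
Proof. by rewrite /ginv; case: pselect => // H _; case: (cid H) => ? []. Qed.

Lemma ginvr x : is_inv x -> x * ginv x = 1.
Proof. by rewrite /ginv; case: pselect => // H _; case: (cid H) => ? []. Qed.

Lemma ginv_uniq x y : y * x = 1 -> x * y = 1 -> ginv x = y.
Proof.
move=> yx1 xy1; have Hx : is_inv x by exists y.
by rewrite -[ginv x]mulr1 -xy1 mulrA ginvl // mul1r.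
Qed.

Lemma ginv1 : ginv 1 = 1.
Proof. by apply: ginv_uniq; rewrite mulr1. Qed.

Lemma ginvM x y : is_inv x -> is_inv y ->
  (ginv y * ginv x) * (x * y) = 1 /\ (x * y) * (ginv y * ginv x) = 1.
Proof.
move=> Hx Hy; split.
  by rewrite mulrA -(mulrA _ _ x) ginvl // mulr1 ginvl.
by rewrite mulrA -(mulrA x) ginvr // mulr1 ginvr.
Qed.

Lemma is_invM x y : is_inv x -> is_inv y -> is_inv (x * y).
Proof. by move=> Hx Hy; exists (ginv y * ginv x); apply: ginvM. Qed.

Lemma ginvMr x y : is_inv x -> is_inv y -> ginv (x * y) = ginv y * ginv x.
Proof. by move=> Hx Hy; have [] := ginvM Hx Hy; apply: ginv_uniq. Qed.

Lemma comm_ginv c x : is_inv x -> c * x = x * c -> c * ginv x = ginv x * c.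
Proof.
move=> Hx cx; rewrite -[c * _]mul1r -(ginvl Hx) -mulrA (mulrA x) -cx.
by rewrite -!mulrA ginvr // mulr1.
Qed.

End GenericInverse.

Lemma ring_hom_ginv (R S : pzRingType) (f : R -> S) x :
  ring_hom f -> is_inv x -> f (ginv x) = ginv (f x).
Proof. by move=> [_ fM f1] Hx; apply/esym/ginv_uniq; rewrite -fM ?ginvl ?ginvr. Qed.

Section OreLocalization.
Variables (k : fieldType) (L : lmodType k) (U : algType k) (iota : L -> U).
Variables (n : nat) (Sn : pzRingType) (phi : {poly U} -> Sn).
Hypothesis Hloc : is_Ore_loc_Tn iota n phi.
Local Notation inT := (inT iota).
Local Notation calU := (in_calU iota).

Lemma phiD p q : inT p -> inT q -> phi (p + q) = phi p + phi q.
Proof. by case: Hloc => H _; apply: H. Qed.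

Lemma phiM p q : inT p -> inT q -> phi (p * q) = phi p * phi q.
Proof. by case: Hloc => _ [H _]; apply: H. Qed.

Lemma phi1 : phi 1 = 1.
Proof. by case: Hloc => _ [] _ [H _]. Qed.

Lemma phi_eq0 p : inT p -> (phi p = 0 <-> in_tnT iota n p).
Proof. by case: Hloc => _ [] _ [] _ [H _]; apply: H. Qed.

Lemma phi_calU_inv u : calU u -> is_inv (phi u).
Proof. by case: Hloc => _ [] _ [] _ [] _ [H _]; apply: H. Qed.

Lemma phi_frac x : exists u r, [/\ calU u, inT r & phi u * x = phi r].
Proof. by case: Hloc => _ [] _ [] _ [] _ [] _ H; apply: H. Qed.

Lemma phi_ore x v : is_inv (phi v) ->
  exists a b, [/\ calU a, inT b & phi a * x = phi b * phi v].
Proof.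
move=> Hv; have [a [b [Ha Hb E]]] := phi_frac (x * ginv (phi v)).
by exists a, b; split=> //; rewrite -E -!mulrA ginvl // mulr1.
Qed.

Lemma phiB p q : inT p -> inT q -> phi (p - q) = phi p - phi q.
Proof.
move=> Hp Hq; apply/(canRL (addrK (phi q))).
by rewrite -phiD ?subrK //; apply: inTB.
Qed.

Lemma phi_central c : inT c -> (forall p, c * p = p * c) ->
  forall x, phi c * x = x * phi c.
Proof.
move=> Hc c_central x; have [u [r [Hu Hr E]]] := phi_frac x.
have Iu := phi_calU_inv Hu.
have -> : x = ginv (phi u) * phi r by rewrite -E mulrA ginvl // mul1r.
have Cu : phi c * phi u = phi u * phi c by rewrite -!phiM ?c_central //; case: Hu.
have Cr : phi c * phi r = phi r * phi c by rewrite -!phiM ?c_central.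
by rewrite mulrA comm_ginv // -!mulrA Cr.
Qed.

Variables (star : L -> L) (tau : U -> U).
Hypothesis tauI : alg_involution tau.
Hypothesis tau_iota : forall x, tau (iota x) = iota (star x).
Local Notation tp := (tau_poly tau).

Lemma phi_tau_poly_eq p q : inT p -> inT q -> phi p = phi q -> phi (tp p) = phi (tp q).
Proof.
move=> Hp Hq E; have Hpq := inTB Hp Hq.
have /(tau_poly_tnT tauI tau_iota) : in_tnT iota n (p - q).
  by apply/phi_eq0 => //; rewrite phiB // E subrr.
have [Hp' Hq'] := (tau_poly_inT tauI tau_iota Hp, tau_poly_inT tauI tau_iota Hq).
rewrite tau_polyB // -phi_eq0 ?phiB //; last exact: inTB.
by move/eqP; rewrite subr_eq0 => /eqP.
Qed.

Lemma phi_tau_polyM p q : inT p -> inT q ->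
  phi (tp (p * q)) = phi (tp q) * phi (tp p).
Proof. by move=> Hp Hq; rewrite tau_polyM // phiM //; apply: tau_poly_inT. Qed.

(* Products a * u of elements of calU need not lie in calU, but they are still
   denominators for which the formula defining sigma_loc applies. *)
Definition denom m := [/\ inT m, is_inv (phi m) & is_inv (phi (tp m))].

Lemma calU_denom u : calU u -> denom u.
Proof.
move=> Hu; split; [by case: Hu | exact: phi_calU_inv |].
exact/phi_calU_inv/(tau_poly_calU tauI tau_iota).
Qed.

Lemma calU_denomM a u : calU a -> calU u -> denom (a * u).
Proof.
move=> Ha Hu; have [[HaT _] [HuT _]] := (Ha, Hu).
split; first exact: inTM.
  by rewrite phiM //; apply: is_invM; apply: phi_calU_inv.
rewrite phi_tau_polyM //.
by apply: is_invM; apply/phi_calU_inv/(tau_poly_calU tauI tau_iota).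
Qed.

Lemma phi_frac_pair x : exists ur : {poly U} * {poly U},
  [/\ calU ur.1, inT ur.2 & phi ur.1 * x = phi ur.2].
Proof. by have [u [r H]] := phi_frac x; exists (u, r). Qed.

(* sigma (u^-1 r) = tau(r) tau(u)^-1, computed on a chosen left fraction. *)
Definition sigma_loc (x : Sn) : Sn :=
  let ur := projT1 (cid (phi_frac_pair x)) in phi (tp ur.2) * ginv (phi (tp ur.1)).

Lemma sigma_loc_frac x m s : denom m -> inT s -> phi m * x = phi s ->
  sigma_loc x = phi (tp s) * ginv (phi (tp m)).
Proof.
move=> [Hm Im Itm] Hs Ex; rewrite /sigma_loc.
case: (cid (phi_frac_pair x)) => [[u r] /= [Hu Hr Er]] /=.
have [a [b [Ha Hb Eab]]] := phi_ore (phi u) Im.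
have [[HuT _] [HaT _]] := (Hu, Ha).
have E1 : phi (a * u) = phi (b * m) by rewrite !phiM.
have E2 : phi (a * r) = phi (b * s) by rewrite !phiM // -Er -Ex !mulrA Eab.
have {E1} := phi_tau_poly_eq (inTM HaT HuT) (inTM Hb Hm) E1.
have {E2} := phi_tau_poly_eq (inTM HaT Hr) (inTM Hb Hs) E2.
rewrite !phi_tau_polyM //.
have IA := phi_calU_inv (tau_poly_calU tauI tau_iota Ha).
have IU := phi_calU_inv (tau_poly_calU tauI tau_iota Hu).
move: IA IU; set A := phi (tp a); set B := phi (tp b); set Uu := phi (tp u).
set M := phi (tp m); set Rr := phi (tp r); set S := phi (tp s).
move=> IA IU E2 E1.
rewrite -[Rr]mulr1 -(ginvr IA) mulrA E2.
have -> : B = ginv M * (Uu * A) by rewrite E1 mulrA ginvl // mul1r.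
by rewrite !mulrA -(mulrA _ A) ginvr // mulr1 -(mulrA _ Uu) ginvr // mulr1.
Qed.

Lemma sigma_loc_phi p : inT p -> sigma_loc (phi p) = phi (tp p).
Proof.
move=> Hp; rewrite (@sigma_loc_frac _ 1 p) ?phi1 ?mul1r //.
  by rewrite tau_poly1 // phi1 ginv1 mulr1.
exact: calU_denom (calU1 iota).
Qed.

Lemma sigma_loc_ginv u : calU u -> sigma_loc (ginv (phi u)) = ginv (phi (tp u)).
Proof.
move=> Hu; rewrite (@sigma_loc_frac _ u 1).
- by rewrite tau_poly1 // phi1 mul1r.
- exact: calU_denom.
- exact: inT1.
- by rewrite ginvr ?phi1 //; apply: phi_calU_inv.
Qed.

Lemma sigma_locD x y : sigma_loc (x + y) = sigma_loc x + sigma_loc y.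
Proof.
have [u [r [Hu Hr Ex]]] := phi_frac x.
have [v [s [Hv Hs Ey]]] := phi_frac y.
have [a [b [Ha Hb Eab]]] := phi_ore (phi u) (phi_calU_inv Hv).
have [[[HuT _] [HvT _]] [HaT _]] := (Hu, Hv, Ha).
have Dau := calU_denomM Ha Hu.
have Ex' : phi (a * u) * x = phi (a * r) by rewrite !phiM // -mulrA Ex.
have Ey' : phi (a * u) * y = phi (b * s) by rewrite !phiM // Eab -mulrA Ey.
have Exy : phi (a * u) * (x + y) = phi (a * r + b * s).
  by rewrite mulrDr Ex' Ey' phiD //; apply: inTM.
have [Har Hbs] := (inTM HaT Hr, inTM Hb Hs).
rewrite (sigma_loc_frac Dau Har Ex') (sigma_loc_frac Dau Hbs Ey').
rewrite (sigma_loc_frac Dau (inTD Har Hbs) Exy) tau_polyD // phiD -?mulrDl //.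
all: exact: tau_poly_inT.
Qed.

Lemma sigma_locM x y : sigma_loc (x * y) = sigma_loc y * sigma_loc x.
Proof.
have [u [r [Hu Hr Ex]]] := phi_frac x.
have [v [s [Hv Hs Ey]]] := phi_frac y.
have [c [d [Hc Hd Ecd]]] := phi_ore (phi r) (phi_calU_inv Hv).
have [[[HuT _] [HvT _]] [HcT _]] := (Hu, Hv, Hc).
have Exy : phi (c * u) * (x * y) = phi (d * s).
  by rewrite !phiM // -mulrA (mulrA (phi u)) Ex mulrA Ecd -mulrA Ey.
have Ecr : phi (c * r) = phi (d * v) by rewrite !phiM.
have := phi_tau_poly_eq (inTM HcT Hr) (inTM Hd HvT) Ecr.
rewrite (sigma_loc_frac (calU_denomM Hc Hu) (inTM Hd Hs) Exy).
rewrite (sigma_loc_frac (calU_denom Hu) Hr Ex) (sigma_loc_frac (calU_denom Hv) Hs Ey).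
have IC := phi_calU_inv (tau_poly_calU tauI tau_iota Hc).
have IV := phi_calU_inv (tau_poly_calU tauI tau_iota Hv).
have IU := phi_calU_inv (tau_poly_calU tauI tau_iota Hu).
rewrite !phi_tau_polyM // ginvMr //.
move: IC IV IU; set C := phi (tp c); set D := phi (tp d); set Uu := phi (tp u).
set V := phi (tp v); set Rr := phi (tp r); set S := phi (tp s).
move=> IC IV IU E.
have K : ginv V * Rr = D * ginv C.
  by rewrite -[ginv V * Rr]mulr1 -(ginvr IC) mulrA -(mulrA _ Rr) E mulrA ginvl // mul1r.
by rewrite !mulrA -(mulrA S (ginv V)) K !mulrA.
Qed.

Lemma sigma_locK : involutive sigma_loc.
Proof.
move=> x; have [u [r [Hu Hr Ex]]] := phi_frac x.
rewrite (sigma_loc_frac (calU_denom Hu) Hr Ex) sigma_locM.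
rewrite sigma_loc_ginv ?sigma_loc_phi; last exact: tau_poly_calU.
  by rewrite !tau_polyK // -Ex mulrA ginvl ?mul1r //; apply: phi_calU_inv.
exact: tau_poly_inT.
Qed.

End OreLocalization.

Section LichtmanDivisionRing.
Variables (k : fieldType) (L : lmodType k) (U : algType k) (iota : L -> U).
Local Unset Implicit Arguments.
Variables (Sn : nat -> pzRingType) (phi : forall n, {poly U} -> Sn n)
    (rho : forall n, Sn n.+1 -> Sn n) (S : pzRingType) (pi : forall n, S -> Sn n)
    (theta : {poly U} -> S) (D : unitRingType) (j : S -> D) (eps : U -> D).
Local Set Implicit Arguments.
Hypothesis Hld : lichtman_data iota phi rho pi theta j eps.
Local Notation inT := (inT iota).
Local Notation t := (j (theta 'X)).

Lemma loc_n n : is_Ore_loc_Tn iota n (phi n).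
Proof. by case: Hld => H _; apply: H. Qed.

Lemma rho_hom n : ring_hom (rho n).
Proof. by case: Hld => _ [H _]; case: (H n). Qed.

Lemma rho_phi n p : inT p -> rho n (phi n.+1 p) = phi n p.
Proof. by case: Hld => _ [H _]; case: (H n) => _; apply. Qed.

Lemma pi_hom n : ring_hom (pi n).
Proof. by case: Hld => _ [_ [H _]]; case: (H n). Qed.

Lemma rho_pi n s : rho n (pi n.+1 s) = pi n s.
Proof. by case: Hld => _ [_ [H _]]; case: (H n) => _; apply. Qed.

Lemma S_lim (x : forall n, Sn n) : (forall n, rho n (x n.+1) = x n) ->
  exists s, forall n, pi n s = x n.
Proof. by case: Hld => _ [_ [_ [H _]]] /H [s [Hs _]]; exists s. Qed.

Lemma S_ext s s' : (forall n, pi n s = pi n s') -> s = s'.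
Proof.
case: Hld => _ [_ [_ [H _]]] E.
have [|s0 [_ Hs0]] := H (fun n => pi n s'); first by move=> n; apply: rho_pi.
by rewrite (Hs0 s E) (Hs0 s').
Qed.

Lemma pi_theta n p : inT p -> pi n (theta p) = phi n p.
Proof. by case: Hld => _ [_ [_ [_ [H _]]]]; apply: H. Qed.

Lemma j_hom : ring_hom j.
Proof. by case: Hld => _ [_ [_ [_ [_ [[H _] _]]]]]. Qed.

Lemma j_inj : injective j.
Proof. by case: Hld => _ [_ [_ [_ [_ [[_ [H _]] _]]]]]. Qed.

Lemma t_unit : t \is a GRing.unit.
Proof. by case: Hld => _ [_ [_ [_ [_ [[_ [_ [H _]]] _]]]]]. Qed.

Lemma D_frac d : exists m s, t ^+ m * d = j s.
Proof. by case: Hld => _ [_ [_ [_ [_ [[_ [_ [_ H]]] _]]]]]. Qed.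

Lemma eps_tXn u n : filt iota n u -> eps u * t ^+ n = j (theta ('X ^+ n * u%:P)).
Proof. by case: Hld => _ [_ [_ [_ [_ [_ H]]]]]; apply: H. Qed.

Lemma piD n x y : pi n (x + y) = pi n x + pi n y. Proof. by case: (pi_hom n). Qed.
Lemma piM n x y : pi n (x * y) = pi n x * pi n y. Proof. by case: (pi_hom n). Qed.
Lemma pi1 n : pi n 1 = 1. Proof. by case: (pi_hom n). Qed.
Lemma jD x y : j (x + y) = j x + j y. Proof. by case: j_hom. Qed.
Lemma jM x y : j (x * y) = j x * j y. Proof. by case: j_hom. Qed.
Lemma j1 : j 1 = 1. Proof. by case: j_hom. Qed.

Lemma jX x m : j (x ^+ m) = j x ^+ m.
Proof. by elim: m => [|m IH]; rewrite ?expr0 ?j1 // !exprS jM IH. Qed.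

Lemma thetaM p q : inT p -> inT q -> theta (p * q) = theta p * theta q.
Proof.
move=> Hp Hq; apply: S_ext => n; rewrite piM (pi_theta _ (inTM Hp Hq)).
by rewrite !pi_theta // (phiM (loc_n n)).
Qed.

Lemma theta1 : theta 1 = 1.
Proof. by apply: S_ext => n; rewrite pi1 (pi_theta _ (inT1 iota)) (phi1 (loc_n n)). Qed.

Lemma thetaXn m : theta 'X^m = theta 'X ^+ m.
Proof.
elim: m => [|m IH]; first by rewrite !expr0 theta1.
by rewrite !exprS (thetaM (inTX iota) (inTXn iota m)) IH.
Qed.

Lemma theta_central c : inT c -> (forall p, c * p = p * c) ->
  forall s, theta c * s = s * theta c.
Proof.
move=> Hc c_central s; apply: S_ext => n; rewrite !piM pi_theta //.
exact: (phi_central (loc_n n)).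
Qed.

(* Every d is t^-m j(s), and t^m commutes with j c, so central elements of S
   stay central in D. *)
Lemma j_central c : (forall s, c * s = s * c) -> forall d, j c * d = d * j c.
Proof.
move=> c_central d; have [m [s E]] := D_frac d.
have Ct : GRing.comm (j c) (t ^+ m).
  by apply: commrX; rewrite /GRing.comm -!jM c_central.
apply: (mulrI (unitrX m t_unit)).
by rewrite mulrA -Ct -mulrA E -jM c_central jM -E mulrA.
Qed.

Lemma tXn_central m d : t ^+ m * d = d * t ^+ m.
Proof.
have t_central : GRing.comm d t.
  apply/esym/j_central/theta_central; first exact: inTX.
  by move=> p; apply/esym/commr_polyX.
exact/esym/commrX.
Qed.

Variables (star : L -> L) (tau : U -> U).
Hypothesis tauI : alg_involution tau.
Hypothesis tau_iota : forall x, tau (iota x) = iota (star x).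
Local Notation tp := (tau_poly tau).

Definition sigma_n n : Sn n -> Sn n := sigma_loc (loc_n n) tau.
Arguments sigma_n : clear implicits.

Lemma rho_sigma_n n x : rho n (sigma_n n.+1 x) = sigma_n n (rho n x).
Proof.
have [u [r [Hu Hr E]]] := phi_frac (loc_n n.+1) x.
have HuT : inT u by case: Hu.
have Hu' := tau_poly_calU tauI tau_iota Hu.
have HuT' : inT (tp u) by case: Hu'.
have Hr' := tau_poly_inT tauI tau_iota Hr.
have Du := calU_denom (loc_n n.+1) tauI tau_iota Hu.
rewrite /sigma_n (sigma_loc_frac _ tauI tau_iota Du Hr E).
case: (rho_hom n) => _ rhoM _.
rewrite rhoM (ring_hom_ginv (rho_hom n) (phi_calU_inv (loc_n n.+1) Hu')).
rewrite !rho_phi //; symmetry.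
apply: (sigma_loc_frac _ tauI tau_iota (calU_denom (loc_n n) tauI tau_iota Hu) Hr).
by rewrite -(rho_phi _ HuT) -rhoM E rho_phi.
Qed.

Lemma sigma_S_ex s : exists s', forall n, pi n s' = sigma_n n (pi n s).
Proof. by apply: S_lim => n; rewrite rho_sigma_n rho_pi. Qed.

Definition sigma_S s : S := projT1 (cid (sigma_S_ex s)).

Lemma pi_sigma_S n s : pi n (sigma_S s) = sigma_n n (pi n s).
Proof. by rewrite /sigma_S; case: (cid (sigma_S_ex s)) => s' /= ->. Qed.

Lemma sigma_SD x y : sigma_S (x + y) = sigma_S x + sigma_S y.
Proof.
by apply: S_ext => n; rewrite piD !pi_sigma_S piD /sigma_n (sigma_locD _ tauI tau_iota).
Qed.

Lemma sigma_SM x y : sigma_S (x * y) = sigma_S y * sigma_S x.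
Proof.
by apply: S_ext => n; rewrite piM !pi_sigma_S piM /sigma_n (sigma_locM _ tauI tau_iota).
Qed.

Lemma sigma_SK : involutive sigma_S.
Proof.
by move=> x; apply: S_ext => n; rewrite !pi_sigma_S /sigma_n (sigma_locK _ tauI tau_iota).
Qed.

Lemma sigma_S_theta p : inT p -> sigma_S (theta p) = theta (tp p).
Proof.
move=> Hp; apply: S_ext => n.
rewrite pi_sigma_S (pi_theta _ Hp) (pi_theta _ (tau_poly_inT tauI tau_iota Hp)).
by rewrite /sigma_n (sigma_loc_phi _ tauI tau_iota).
Qed.

Lemma sigma_S_thetaXn m : sigma_S (theta 'X ^+ m) = theta 'X ^+ m.
Proof. by rewrite -thetaXn (sigma_S_theta (inTXn iota m)) tau_polyXn. Qed.

Lemma D_frac_pair d : exists ms : nat * S, t ^+ ms.1 * d = j ms.2.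
Proof. by have [m [s E]] := D_frac d; exists (m, s). Qed.

(* sigma (t^-m s) = t^-m sigma_S(s): t is central and fixed by sigma_S. *)
Definition sigma_D : D -> D := locked (fun d =>
  let ms := projT1 (cid (D_frac_pair d)) in (t ^+ ms.1)^-1 * j (sigma_S ms.2)).

Lemma sigma_D_frac d m s : t ^+ m * d = j s -> t ^+ m * sigma_D d = j (sigma_S s).
Proof.
move=> E; rewrite /sigma_D -lock; case: (cid (D_frac_pair d)) => [[m0 s0]] /= E0.
have U0 := unitrX m0 t_unit.
have E1 : theta 'X ^+ m * s0 = theta 'X ^+ m0 * s.
  by apply: j_inj; rewrite !jM !jX -E -E0 !mulrA -!exprD addnC.
have E2 : j (sigma_S s0) * t ^+ m = j (sigma_S s) * t ^+ m0.
  by rewrite -!jX -!jM -(sigma_S_thetaXn m) -(sigma_S_thetaXn m0) -!sigma_SM E1.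
apply: (mulrI U0); rewrite mulrA (tXn_central m0 (t ^+ m)) -mulrA (mulVKr U0).
by rewrite (tXn_central m) E2 -(tXn_central m0).
Qed.

Lemma sigma_D_j s : sigma_D (j s) = j (sigma_S s).
Proof. by have := @sigma_D_frac (j s) 0 s; rewrite expr0 !mul1r; apply. Qed.

Lemma sigma_DD d e : sigma_D (d + e) = sigma_D d + sigma_D e.
Proof.
have [m [s E]] := D_frac d; have [m' [s' E']] := D_frac e.
have E2 : t ^+ (m + m') * (d + e) = j (theta 'X ^+ m' * s + theta 'X ^+ m * s').
  rewrite jD !jM !jX -E -E' !mulrA exprD mulrDr ?mulrA.
  by rewrite (tXn_central m (t ^+ m')).
apply: (mulrI (unitrX (m + m') t_unit)); rewrite (sigma_D_frac E2).
rewrite sigma_SD !sigma_SM !sigma_S_thetaXn jD !jM !jX mulrDr exprD.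
rewrite (tXn_central m (t ^+ m')) -!mulrA (sigma_D_frac E); congr (_ + _).
  by rewrite (tXn_central m').
by rewrite mulrA (tXn_central m' (t ^+ m)) -mulrA (sigma_D_frac E') (tXn_central m).
Qed.

Lemma sigma_DM d e : sigma_D (d * e) = sigma_D e * sigma_D d.
Proof.
have [m [s E]] := D_frac d; have [m' [s' E']] := D_frac e.
have E2 : t ^+ (m + m') * (d * e) = j (s * s').
  rewrite jM -E -E' exprD -!mulrA; congr (t ^+ m * _).
  by rewrite !mulrA (tXn_central m' d).
apply: (mulrI (unitrX (m + m') t_unit)); rewrite (sigma_D_frac E2) sigma_SM jM exprD.
rewrite -(sigma_D_frac E) -(sigma_D_frac E') !mulrA; congr (_ * _).
by rewrite -(tXn_central m (t ^+ m' * sigma_D e)) mulrA.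
Qed.

Lemma sigma_DK : involutive sigma_D.
Proof.
move=> d; have [m [s E]] := D_frac d.
apply: (mulrI (unitrX m t_unit)).
by rewrite (sigma_D_frac (sigma_D_frac E)) sigma_SK E.
Qed.

Lemma sigma_D1 : sigma_D 1 = 1.
Proof. by rewrite -j1 -theta1 sigma_D_j (sigma_S_theta (inT1 iota)) tau_poly1 // theta1 j1. Qed.

Lemma sigma_DV d : sigma_D d^-1 = (sigma_D d)^-1.
Proof.
have unit_sigma_D x : x \is a GRing.unit -> sigma_D x \is a GRing.unit.
  by move=> Ux; apply/unitrP; exists (sigma_D x^-1); rewrite -!sigma_DM mulVr ?mulrV ?sigma_D1.
have [Ud|nUd] := boolP (d \is a GRing.unit).
  by apply: (mulrI (unit_sigma_D _ Ud)); rewrite -sigma_DM mulVr ?mulrV ?sigma_D1 ?unit_sigma_D.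
rewrite !invr_out //; apply: contra nUd => /unit_sigma_D.
by rewrite sigma_DK.
Qed.

Lemma sigma_D_eps u n : filt iota n u -> sigma_D (eps u) = eps (tau u).
Proof.
move=> Hu; have E := eps_tXn Hu; have E' := eps_tXn (tau_filt tauI tau_iota Hu).
have sigma_D_tXn : sigma_D (t ^+ n) = t ^+ n.
  by rewrite -jX sigma_D_j -thetaXn sigma_S_theta ?tau_polyXn //; apply: inTXn.
apply: (mulrI (unitrX n t_unit)).
rewrite -{1}sigma_D_tXn -sigma_DM E sigma_D_j (sigma_S_theta (inT_XnC Hu)).
by rewrite (tau_poly_XnC tauI) -E' (tXn_central n).
Qed.

Lemma eps_alg_central a d : eps a%:A * d = d * eps a%:A.
Proof.
have := eps_tXn (filt_alg iota a); rewrite expr0 mulr1 => ->.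
apply/j_central/theta_central; first exact: inT_XnC (filt_alg iota a).
move=> p; rewrite expr0 mul1r; apply/polyP => i.
by rewrite coefCM coefMC mulr_algl mulr_algr.
Qed.

Lemma sigma_D_epsZ a x : sigma_D (eps a%:A * x) = eps a%:A * sigma_D x.
Proof.
by rewrite sigma_DM (sigma_D_eps (filt_alg iota a)) (tau_alg tauI) eps_alg_central.
Qed.

End LichtmanDivisionRing.

Section FiltrationExhaustive.
Variables (k : fieldType) (L : lmodType k) (U : algType k) (iota : L -> U).

Definition filtered : pred U := fun u => `[< exists n, filt iota n u >].

Lemma filtered_subalg_closed : GRing.subsemialg_closed filtered.
Proof.
split.
- by apply/asboolP; exists 0%N; apply: filt1.
- split; first by apply/asboolP; exists 0%N; apply: filt0.
  move=> u v /asboolP [n Hu] /asboolP [m Hv]; apply/asboolP; exists (maxn n m).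
  by apply: filtD; [apply: filt_le Hu; apply: leq_maxl | apply: filt_le Hv; apply: leq_maxr].
- by move=> a u /asboolP [n Hu]; apply/asboolP; exists n; apply: filtZ.
- by move=> u v /asboolP [n Hu] /asboolP [m Hv]; apply/asboolP; exists (n + m)%N; apply: filtM.
Qed.

Record filtered_subalg := FilteredSubalg { filtered_val : U; _ : filtered filtered_val }.
HB.instance Definition _ := [isSub for filtered_val].
HB.instance Definition _ := [Choice of filtered_subalg by <:].
HB.instance Definition _ := GRing.SubChoice_isSubAlgebra.Build k U filtered
  filtered_subalg filtered_subalg_closed.

(* The filtered elements form a subalgebra containing iota L; by the uniqueness
   part of the universal property it is all of U. *)
Lemma filt_exhaustive (br : L -> L -> L) : is_UEA br iota ->
  forall u, exists n, filt iota n u.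
Proof.
move=> [[ilin ibr] Huniv] u.
have iota_filtered x : filtered (iota x).
  apply/asboolP; exists 1%N; have := @filt_monomial _ _ _ iota 1 1 [:: x].
  by rewrite big_seq1 scale1r; apply.
pose f x := FilteredSubalg (iota_filtered x).
have f_lie : lie_map br f.
  by split=> [a x y|x y]; apply: val_inj => /=; [apply: ilin | apply: ibr].
have [[g [[gl gm g1] g_iota]] _] := Huniv _ f f_lie.
have [_ iota_uniq] := Huniv _ iota (conj ilin ibr).
have <- : filtered_val (g u) = u.
  apply: (iota_uniq (filtered_val \o g) id) => //= [|x]; last by rewrite g_iota.
  by split=> [a x y|x y|] /=; rewrite ?gl ?gm ?g1.
exact/asboolP/(valP (g u)).
Qed.

End FiltrationExhaustive.

Section ConverseAlgebra.
Variables (k : fieldType) (U : algType k).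

HB.instance Definition _ := GRing.Lmodule.copy U^c U.
HB.instance Definition _ := GRing.Lmodule_isLalgebra.Build k U^c
  (fun a (u v : U) => @scalerAr k U a v u).
HB.instance Definition _ := GRing.Lalgebra_isAlgebra.Build k U^c
  (fun a (x y : U) => @scalerAl k U a y x).

End ConverseAlgebra.

(* An algebra involution of U is an algebra morphism U -> U^c, so it is
   determined by the universal property from the Lie map iota \o star. *)
Lemma UEA_involution (k : fieldType) (L : lmodType k) (br : L -> L -> L)
    (star : L -> L) (U : algType k) (iota : L -> U) :
  lie_involution br star -> is_UEA br iota ->
  exists tau : U -> U,
  [/\ alg_involution tau, (forall x, tau (iota x) = iota (star x)) &
      (forall tau' : U -> U, alg_involution tau' ->
         (forall x, tau' (iota x) = iota (star x)) -> forall u, tau' u = tau u)].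
Proof.
move=> [slin sbr sK] [[ilin ibr] Huniv].
pose f x := (iota (star x) : U^c).
have f_lie : lie_map (A := U^c) br f.
  by split=> [a x y|x y]; rewrite /f ?slin ?ilin // sbr ibr.
have [[g [[gl gm g1] g_iota]] g_uniq] := Huniv _ f f_lie.
have [_ iota_uniq] := Huniv _ iota (conj ilin ibr).
have gK : involutive (g : U -> U).
  apply: (iota_uniq (g \o g) id) => // [|x]; last by rewrite /= !g_iota /f sK.
  by split=> [a x y|x y|] /=; rewrite ?gl ?gm ?g1.
exists g; split=> [|//|tau' [tl tm tK] tau'_iota u]; first by split.
apply: (g_uniq tau' g) => //; split=> //.
by have := tm (tau' 1) 1; rewrite mulr1 !tK mulr1.
Qed.

Lemma lie_involution_opp (k : fieldType) (L : lmodType k) (br : L -> L -> L) :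
  is_lie_bracket br -> lie_involution br (fun x => - x).
Proof.
move=> [brl brr brxx _].
have brD1 x y z : br (x + y) z = br x z + br y z by have := brl 1 x y z; rewrite !scale1r.
have brD2 x y z : br z (x + y) = br z x + br z y by have := brr 1 x y z; rewrite !scale1r.
have br0l z : br 0 z = 0 by apply: (addrI (br 0 z)); rewrite -brD1 !addr0.
have br0r z : br z 0 = 0 by apply: (addrI (br z 0)); rewrite -brD2 !addr0.
have brN1 y z : br (- y) z = - br y z.
  by apply: (addrI (br y z)); rewrite -brD1 !subrr br0l.
have brN2 y z : br z (- y) = - br z y.
  by apply: (addrI (br z y)); rewrite -brD2 !subrr br0r.
split=> [a x y|x y|x]; rewrite ?opprK //; first by rewrite opprD scalerN.
rewrite brN1 brN2 opprK; apply/eqP; rewrite eq_sym -addr_eq0 addrC.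
by have := brxx (x + y); rewrite brD1 !brD2 !brxx add0r addr0 => ->.
Qed.

Lemma gen_divring_involution (k : fieldType) (U : algType k) (D : unitRingType)
    (eps : U -> D) (sigma : D -> D) :
  {morph sigma : x y / x + y} -> (forall x y, sigma (x * y) = sigma y * sigma x) ->
  sigma 1 = 1 -> {morph sigma : x / x^-1} -> involutive sigma ->
  (forall a x, sigma (eps a%:A * x) = eps a%:A * sigma x) ->
  (forall u, exists v, sigma (eps u) = eps v) ->
  divring_involution eps (gen_divring (fun d => exists u, d = eps u)) sigma.
Proof.
move=> sD sM s1 sV sK sZ s_eps.
have sB x y : sigma (x - y) = sigma x - sigma y.
  by apply/(canRL (addrK (sigma y))); rewrite -sD subrK.
split=> // x Hx P P_eps P1 PB PM PV; apply: (Hx (P \o sigma)) => /=.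
- by move=> _ [u ->]; have [v ->] := s_eps u; apply: P_eps; exists v.
- by rewrite s1.
- by move=> a b Pa Pb; rewrite sB; apply: PB.
- by move=> a b Pa Pb; rewrite sM; apply: PM.
- by move=> a Pa; rewrite sV; apply: PV.
Qed.

Lemma UEA_involution_extends (k : fieldType) (L : lmodType k) (br : L -> L -> L)
    (star : L -> L) (U : algType k) (iota : L -> U)
    (Sn : nat -> pzRingType) (phi : forall n, {poly U} -> Sn n)
    (rho : forall n, Sn n.+1 -> Sn n) (S : pzRingType) (pi : forall n, S -> Sn n)
    (theta : {poly U} -> S) (D : unitRingType) (j : S -> D) (eps : U -> D) :
  lie_involution br star -> is_UEA br iota ->
  lichtman_data iota phi rho pi theta j eps ->
  exists tau : U -> U,
     [/\ alg_involution tau, (forall x, tau (iota x) = iota (star x)),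
         (forall tau' : U -> U, alg_involution tau' ->
            (forall x, tau' (iota x) = iota (star x)) -> forall u, tau' u = tau u) &
         exists sigma : D -> D,
           divring_involution eps (gen_divring (fun d => exists u, d = eps u)) sigma /\
           forall u, sigma (eps u) = eps (tau u)].
Proof.
move=> Hstar HU Hld.
have [tau [tauI tau_iota tau_uniq]] := UEA_involution Hstar HU.
pose sigma := sigma_D Hld tauI tau_iota.
have sigma_eps u : sigma (eps u) = eps (tau u).
  by have [n Hn] := filt_exhaustive HU u; apply: sigma_D_eps Hn.
exists tau; split=> //; exists sigma; split=> //.
apply: gen_divring_involution.
- exact: sigma_DD.
- exact: sigma_DM.
- exact: sigma_D1.
- exact: sigma_DV.
- exact: sigma_DK.
- exact: sigma_D_epsZ.
- by move=> u; exists (tau u).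
Qed.

Theorem mainTheorem1 (k : fieldType) (L : lmodType k) (br : L -> L -> L)
    (star : L -> L) (U : algType k) (iota : L -> U)
    (Sn : nat -> pzRingType) (phi : forall n, {poly U} -> Sn n)
    (rho : forall n, Sn n.+1 -> Sn n) (S : pzRingType) (pi : forall n, S -> Sn n)
    (theta : {poly U} -> S) (D : unitRingType) (j : S -> D) (eps : U -> D) :
  is_lie_bracket br -> lie_involution br star ->
  is_UEA br iota ->
  lichtman_data iota phi rho pi theta j eps ->
  (exists tau : U -> U,
     [/\ alg_involution tau, (forall x, tau (iota x) = iota (star x)),
         (forall tau' : U -> U, alg_involution tau' ->
            (forall x, tau' (iota x) = iota (star x)) -> forall u, tau' u = tau u) &
         exists sigma : D -> D,
           divring_involution eps (gen_divring (fun d => exists u, d = eps u)) sigma /\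
           forall u, sigma (eps u) = eps (tau u)])
  /\
  (exists sigma : D -> D,
     divring_involution eps (gen_divring (fun d => exists u, d = eps u)) sigma /\
     forall x, sigma (eps (iota x)) = eps (iota (- x))).
Proof.
move=> Hbr Hstar HU Hld; split; first exact: UEA_involution_extends Hstar HU Hld.
have [tau [_ tau_iota _ [sigma [Hsigma sigma_eps]]]] :=
  UEA_involution_extends (lie_involution_opp Hbr) HU Hld.
by exists sigma; split=> // x; rewrite sigma_eps tau_iota.
Qed.
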